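(* Let $\mathbf{m}=(m_i)_{i\in I}$ with $m_i\in\mathbb{Z}_{\ge0}$, $m=\sum_i m_i$, and let $(\mathbf{i},\mathbf{a})\in I^m\times\mathbb{Z}^m$ be an integral pair such that $a_1\le a_2\le\dots\le a_m$ and $\mathbf{i}$ is a rearrangement of $\mathbf{i}_{\mathbf{m}}$. Let $\pi\in S_m$ be the shortest permutation with $\pi(\mathbf{i})=\mathbf{i}_{\mathbf{m}}$. Then $\pi$ is $(\mathbf{i},\mathbf{a})$-admissible.
   Context: $I$ is the vertex set of a finite simple bipartite graph $I=I_{\bar0}\sqcup I_{\bar1}$ (parities $0,1$); every edge is oriented from its even endpoint to its odd endpoint, and $i\leftarrow j$ means there is an oriented edge from $j$ to $i$. Fix a total order on $I$ in which all even vertices precede all odd ones. $\mathbf{i}_{\mathbf{m}}\in I^m$ is the sequence in which the vertices of $I$ appear in this total order, each $i$ repeated $m_i$ times. $(\mathbf{i},\mathbf{a})$ is integral if each $a_k$ is an integer whose residue mod 2 equals the parity of $i_k$. $S_m$ acts on tuples by $\pi(\mathbf{a})=(a_{\pi^{-1}(1)},\dots,a_{\pi^{-1}(m)})$. Distinct indices $k,l$ are not $(\mathbf{i},\mathbf{a})$-switchable if $i_k\leftarrow i_l$ and $a_k=a_l+1$ (checked for the pair in either order); $\pi$ is $(\mathbf{i},\mathbf{a})$-admissible if for every non-switchable pair $k,l$, $\pi(k),\pi(l)$ are in the same relative order as $k,l$. *)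

From mathcomp Require Import all_boot all_order all_algebra all_fingroup.
Set Implicit Arguments. Unset Strict Implicit. Unset Printing Implicit Defensive.

(* The vertex set I is 'I_n; the fixed total order on I is the natural order
   of 'I_n.  Parity: p x = false means x is even, p x = true means x is odd. *)

Definition simple_bipartite n (e : rel 'I_n) (p : 'I_n -> bool) : Prop :=
  [/\ symmetric e, irreflexive e & forall x y, e x y -> p x != p y].

Definition evens_first n (p : 'I_n -> bool) : Prop :=
  forall x y : 'I_n, ~~ p x -> p y -> x < y.

(* x <- y : there is an oriented edge from y to x (edges go even -> odd). *)
Definition arrow n (e : rel 'I_n) (p : 'I_n -> bool) (x y : 'I_n) : bool :=
  [&& e x y, p x & ~~ p y].

Definition seq_im n (m : 'I_n -> nat) : seq 'I_n :=
  flatten [seq nseq (m j) j | j <- enum 'I_n].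

Definition act_seq (T : Type) M (s : 'S_M) (x : 'I_M -> T) : seq T :=
  [seq x ((s^-1)%g k) | k <- enum 'I_M].

Definition perm_length M (s : 'S_M) : nat :=
  #|[set q : 'I_M * 'I_M | (q.1 < q.2) && (s q.2 < s q.1)]|.

Definition integral n (p : 'I_n -> bool) M (i : 'I_M -> 'I_n) (a : 'I_M -> int)
  : Prop := forall k, modz (a k) 2 = Posz (p (i k) : nat).

Definition not_switchable n (e : rel 'I_n) (p : 'I_n -> bool) M
  (i : 'I_M -> 'I_n) (a : 'I_M -> int) (k l : 'I_M) : bool :=
  (k != l) &&
  ((arrow e p (i k) (i l) && (a k == a l + 1)%R) ||
   (arrow e p (i l) (i k) && (a l == a k + 1)%R)).

Definition admissible n (e : rel 'I_n) (p : 'I_n -> bool) M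
  (i : 'I_M -> 'I_n) (a : 'I_M -> int) (s : 'S_M) : Prop :=
  forall k l : 'I_M, not_switchable e p i a k l -> (k < l) = (s k < s l).

From mathcomp Require Import all_boot all_order all_algebra all_fingroup.
Import Order.TTheory GRing.Theory Num.Theory.

Set Implicit Arguments.
Unset Strict Implicit.
Unset Printing Implicit Defensive.

(* Idea: a non-switchable pair (k, l) with i_k <- i_l has i_k odd, i_l even and
   a_k = a_l + 1.  As a is nondecreasing, l comes before k; as the even vertex
   i_l precedes the odd vertex i_k and pi sorts i, pi l also comes before pi k. *)

Lemma pairwise_flatten_nseq (T : eqType) (r : rel T) (f : T -> nat) (s : seq T) :
  reflexive r -> pairwise r s -> pairwise r (flatten [seq nseq (f j) j | j <- s]).
Proof.
move=> r_refl; elim: s => //= j s IH /andP[r_j r_s].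
rewrite pairwise_cat IH // andbT; apply/andP; split.
- apply/allrelP => x y /nseqP[-> _] /flatten_mapP[z z_s /nseqP[-> _]].
  exact: (allP r_j).
- by elim: (f j) => //= k ->; rewrite all_nseq r_refl orbT.
Qed.

Lemma sorted_seq_im n (m : 'I_n -> nat) :
  sorted (fun x y : 'I_n => x <= y) (seq_im m).
Proof.
rewrite sorted_pairwise; last by move=> y x z; apply: leq_trans.
apply: pairwise_flatten_nseq => //.
by rewrite -(pairwise_map val) val_enum_ord -sorted_pairwise ?iota_sorted //;
  apply: leq_trans.
Qed.

Section ActSeq.

Variables (T : Type) (M : nat) (s : 'S_M) (x : 'I_M -> T).

Lemma size_act_seq : size (act_seq s x) = M.
Proof. by rewrite size_map size_enum_ord. Qed.

Lemma nth_act_seq x0 (k : 'I_M) : nth x0 (act_seq s x) (s k) = x k.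
Proof. by rewrite (nth_map (s k)) ?size_enum_ord // nth_ord_enum permK. Qed.

Lemma sorted_act_seq_homo (r : rel T) :
  transitive r -> reflexive r -> sorted r (act_seq s x) ->
  forall k l : 'I_M, s k <= s l -> r (x k) (x l).
Proof.
move=> r_trans r_refl sorted_sx k l.
have := sorted_leq_nth r_trans r_refl (x k) sorted_sx (s k) (s l).
by rewrite !inE size_act_seq !ltn_ord !nth_act_seq; apply.
Qed.

End ActSeq.

Section Admissible.

Variables (n M : nat) (e : rel 'I_n) (p : 'I_n -> bool).
Variables (i : 'I_M -> 'I_n) (a : 'I_M -> int) (pi : 'S_M).

Hypothesis evens_first_p : evens_first p.
Hypothesis a_nondecreasing : forall k l : 'I_M, k <= l -> (a k <= a l)%R.
Hypothesis pi_sorts_i : sorted (fun x y : 'I_n => x <= y) (act_seq pi i).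

Lemma pi_sorted_le k l : pi k <= pi l -> i k <= i l.
Proof. by apply: (sorted_act_seq_homo _ _ pi_sorts_i) => // y x z; apply: leq_trans. Qed.

Lemma arrow_ltn x y : arrow e p x y -> y < x.
Proof. by case/and3P=> _ px npy; apply: evens_first_p. Qed.

Lemma arrow_succ_order k l :
  arrow e p (i k) (i l) -> a k = (a l + 1)%R -> l < k /\ pi l < pi k.
Proof.
move=> ikl akl; have a_lt : (a l < a k)%R by rewrite akl ltrDl ltr01.
split; rewrite ltnNge.
- by move: a_lt; apply: contraL => /a_nondecreasing; rewrite leNgt.
- by move: (arrow_ltn ikl); apply: contraL => /pi_sorted_le; rewrite leqNgt.
Qed.

Lemma admissible_of_sorted : admissible e p i a pi.
Proof.
move=> k l /andP[_ /orP[/andP[ikl /eqP akl] | /andP[ilk /eqP alk]]].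
- by have [lk plk] := arrow_succ_order ikl akl; rewrite !ltnNge (ltnW lk) (ltnW plk).
- by have [-> ->] := arrow_succ_order ilk alk.
Qed.

End Admissible.

Theorem lemma5p8 (n : nat) (e : rel 'I_n) (p : 'I_n -> bool)
  (m : 'I_n -> nat) (i : 'I_(\sum_(j < n) m j) -> 'I_n)
  (a : 'I_(\sum_(j < n) m j) -> int) (pi : 'S_(\sum_(j < n) m j)) :
  simple_bipartite e p ->
  evens_first p ->
  integral p i a ->
  (forall k l : 'I_(\sum_(j < n) m j), k <= l -> (a k <= a l)%R) ->
  perm_eq [seq i k | k <- enum 'I_(\sum_(j < n) m j)] (seq_im m) ->
  act_seq pi i = seq_im m ->
  (forall s : 'S_(\sum_(j < n) m j),
      act_seq s i = seq_im m -> perm_length pi <= perm_length s) ->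
  admissible e p i a pi.
Proof.
move=> _ evens_first_p _ a_nondecreasing _ pi_i _.
apply: admissible_of_sorted evens_first_p a_nondecreasing _.
by rewrite pi_i; apply: sorted_seq_im.
Qed.
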